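(* Fix $q\in(0,1)$. For all $i_1,i_2,j_1,j_2\in\mathbb{Z}_{\ge0}$, as rational functions of $(s_1,s_2)$, $$R_{\frac{s_2}{s_1},s_1,s_2}(i_1,i_2;j_1,j_2)=\mathbf{1}_{i_1+j_2=i_2+j_1}\cdot\mathbf{1}_{j_2\le j_1}\cdot\varphi_{q,s_2^2/s_1^2,\,s_2^2}(j_2\mid j_1).$$
   Context: $q$-Pochhammer symbols: $(a;q)_k=\prod_{i=0}^{k-1}(1-aq^i)$ for $k\ge1$, $(a;q)_0=1$, and for $k\le-1$, $(a;q)_k=1/(a/q;1/q)_{-k}$. The regularized terminating series is ${}_{r+1}\bar\phi_r\bigl(q^{-n};a_1,\dots,a_r;b_1,\dots,b_r\mid q,z\bigr)=\sum_{k=0}^{n}\frac{z^k(q^{-n};q)_k}{(q;q)_k}\prod_{i=1}^r(a_i;q)_k(b_iq^k;q)_{n-k}$. The cross vertex weights are $$R_{z,s_1,s_2}(i_1,i_2;j_1,j_2)=\mathbf{1}_{j_1+i_2=i_1+j_2}\,\frac{(-s_1z)^{j_1}q^{\frac12 j_1(j_1+2i_2-1)}s_2^{\,i_2+j_2-i_1}(zs_1s_2^{-1};q)_{j_2-j_1}}{(q;q)_{i_1}(zs_1s_2;q)_{i_1+j_2}(s_1^{-2}q^{1-i_2};q)_{i_2-j_2}}\,{}_4\bar\phi_3\!\left(\begin{matrix}q^{-i_1};q^{-j_1},zs_1^{-1}s_2,qz^{-1}s_1^{-1}s_2\\ s_2^2,q^{1+j_2-j_1},s_1^{-2}q^{1-i_1-j_2}\end{matrix}\Big|q,q\right).$$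 The $q$-beta-binomial weights are, for $m\in\mathbb{Z}_{\ge0}$ and $0\le j\le m$, $\varphi_{q,\mu,\nu}(j\mid m)=\mu^j\frac{(\nu/\mu;q)_j(\mu;q)_{m-j}}{(\nu;q)_m}\frac{(q;q)_m}{(q;q)_j(q;q)_{m-j}}$ (where $\mu^j(\nu/\mu;q)_j$ means $\prod_{i=0}^{j-1}(\mu-\nu q^i)$), and $\varphi_{q,\mu,\nu}(j\mid m)=0$ for $j>m$. *)

From HB Require Import structures.
From mathcomp Require Import all_boot all_order all_algebra.
From mathcomp Require Import fraction.
Set Implicit Arguments. Unset Strict Implicit. Unset Printing Implicit Defensive.
Import Order.TTheory GRing.Theory Num.Theory.
Local Open Scope ring_scope.

Section Weights.
Variable F : fieldType.

Definition qpoch (a q : F) (k : int) : F :=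
  match k with
  | Posz n => \prod_(i < n) (1 - a * q ^+ i)
  | Negz n => (\prod_(i < n.+1) (1 - (a / q) * (q^-1) ^+ i))^-1
  end.

(* regularized terminating series r+1 phibar r (q^{-n}; a; b | q, z),
   with a = [:: a_1; ...; a_r], b = [:: b_1; ...; b_r] *)
Definition phibar (n : nat) (a b : seq F) (q z : F) : F :=
  \sum_(k < n.+1)
    z ^+ k * qpoch (q ^- n) q k / qpoch q q k *
    \prod_(i < size a) (qpoch a`_i q k * qpoch (b`_i * q ^+ k) q (n - k)%N).

Definition Rweight (q z s1 s2 : F) (i1 i2 j1 j2 : nat) : F :=
  (j1 + i2 == i1 + j2)%N%:R *
  ((- (s1 * z)) ^+ j1 * q ^+ ((j1 * (j1 + 2 * i2 - 1)) %/ 2)%N *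
   s2 ^ (i2%:Z + j2%:Z - i1%:Z) *
   qpoch (z * s1 / s2) q (j2%:Z - j1%:Z) /
   (qpoch q q i1 * qpoch (z * s1 * s2) q (i1 + j2)%N *
    qpoch (s1 ^- 2 * q ^ (1 - i2%:Z)) q (i2%:Z - j2%:Z)) *
   phibar i1 [:: q ^- j1; z / s1 * s2; q / z / s1 * s2]
             [:: s2 ^+ 2; q ^ (1 + j2%:Z - j1%:Z); s1 ^- 2 * q ^ (1 - i1%:Z - j2%:Z)]
             q q).

Definition qbb (q mu nu : F) (j m : nat) : F :=
  if (j <= m)%N then
    (\prod_(i < j) (mu - nu * q ^+ i)) * qpoch mu q (m - j)%N / qpoch nu q m *
    (qpoch q q m / (qpoch q q j * qpoch q q (m - j)%N))
  else 0.

End Weights.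

(* The field of rational functions in two variables (s1, s2) over R:
   s1 := constant-in-'X polynomial 'X (inner variable), s2 := outer 'X. *)
Definition ratfun2 (R : realFieldType) := {fraction {poly {poly R}}}.
Definition rf_const (R : realFieldType) (c : R) : ratfun2 R := FracField.tofrac (c%:P%:P).
Definition rf_s1 (R : realFieldType) : ratfun2 R := FracField.tofrac (('X : {poly R})%:P).
Definition rf_s2 (R : realFieldType) : ratfun2 R := FracField.tofrac ('X : {poly {poly R}}).

From HB Require Import structures.
From mathcomp Require Import all_boot all_order all_algebra.
From mathcomp Require Import fraction.
From mathcomp.algebra_tactics Require Import ring.
From mathcomp Require Import zify.
Set Implicit Arguments. Unset Strict Implicit. Unset Printing Implicit Defensive.
Import Order.TTheory GRing.Theory Num.Theory.
Local Open Scope ring_scope.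

(* At z = s2/s1 the weight degenerates.  Its prefactor (z s1/s2; q)_{j2-j1} = (1; q)_{j2-j1}
   vanishes when j2 > j1.  Otherwise, writing j1 = j2 + d and i1 = i2 + d, the lower
   parameter q^{1+j2-j1} = q^{1-d} kills the first d terms of the 4phi3, and what remains is
   a balanced terminating 3phi2, summed by the q-Pfaff-Saalschutz formula (proved below by a
   WZ telescoping argument).  The resulting product of q-Pochhammer symbols collapses to the
   q-beta-binomial weight. *)

(* Keeps [/=] from unfolding [qpoch a p (Posz n)] into its defining product. *)
#[local] Arguments qpoch : simpl never.

Lemma bin2D m n : 'C(m + n, 2) = ('C(m, 2) + 'C(n, 2) + m * n)%N.
Proof.
elim: n => [|n IHn]; first by rewrite bin0n !(addn0, muln0).
by rewrite addnS binS IHn bin1 binS bin1 mulnS; lia.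
Qed.

Lemma bin2_sqr m : ('C(m, 2) * 2 + m = m * m)%N.
Proof. by elim: m => [|m IHm] //; rewrite binS bin1; nia. Qed.

Lemma half_mul_bin2 m n : ((m * (m + 2 * n - 1)) %/ 2 = 'C(m, 2) + m * n)%N.
Proof.
have -> : (m * (m + 2 * n - 1) = ('C(m, 2) + m * n) * 2)%N.
  by have := bin2_sqr m; case: m => [|m]; nia.
by rewrite mulnK.
Qed.

Lemma expfz_subn (F : fieldType) (x : F) (m n : nat) :
  x != 0 -> x ^ (m%:Z - n%:Z) = x ^+ m / x ^+ n.
Proof. by move=> x_nz; rewrite expfzDr // -exprnN. Qed.

Section QPochhammer.
Variable F : fieldType.
Implicit Types (a b c p x y : F) (d j m n : nat).

Lemma subr_neq0_div x y : x != 0 -> y / x != 1 -> x - y != 0.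
Proof. by move=> x_nz; rewrite subr_eq0; apply: contraNneq => <-; rewrite divff. Qed.

Lemma one_sub_neq0 x : x != 1 -> 1 - x != 0.
Proof. by rewrite subr_eq0 eq_sym. Qed.

Lemma qpoch0 a p : qpoch a p 0 = 1.
Proof. exact: big_ord0. Qed.

Lemma qpochS a p n : qpoch a p n.+1 = qpoch a p n * (1 - a * p ^+ n).
Proof. exact: big_ord_recr. Qed.

Lemma qpochSl a p n : qpoch a p n.+1 = (1 - a) * qpoch (a * p) p n.
Proof.
rewrite /qpoch big_ord_recl expr0 mulr1; congr (_ * _).
by apply: eq_bigr => i _; rewrite exprS mulrA.
Qed.

Lemma qpochD a p m n : qpoch a p (m + n)%N = qpoch a p m * qpoch (a * p ^+ m) p n.
Proof.
rewrite /qpoch big_split_ord; congr (_ * _).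
by apply: eq_bigr => i _; rewrite exprD mulrA.
Qed.

Lemma qpoch_shift1 a p n : a != 1 ->
  qpoch (a * p) p n = qpoch a p n * (1 - a * p ^+ n) / (1 - a).
Proof. by move=> a_neq1; rewrite -qpochS qpochSl mulrAC divff ?mul1r ?one_sub_neq0. Qed.

Lemma qpoch_eq0 a p n i : (i < n)%N -> a * p ^+ i = 1 -> qpoch a p n = 0.
Proof. by move=> lt_in ai1; rewrite /qpoch (bigD1 (Ordinal lt_in)) //= ai1 subrr mul0r. Qed.

Lemma qpoch_neq0 a p n : (forall i, (i < n)%N -> a * p ^+ i != 1) -> qpoch a p n != 0.
Proof.
move=> neq1; rewrite /qpoch prodf_seq_neq0; apply/allP => i _.
by rewrite subr_eq0 eq_sym neq1.
Qed.

Lemma qpoch_neq0_le a p m n : (m <= n)%N -> qpoch a p n != 0 -> qpoch a p m != 0.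
Proof. by move=> /subnKC <-; rewrite qpochD mulf_eq0 negb_or => /andP[]. Qed.

Lemma qpoch_subn a p m n : (m <= n)%N -> qpoch a p m != 0 ->
  qpoch (a * p ^+ m) p (n - m)%N = qpoch a p n / qpoch a p m.
Proof.
by move=> /subnKC {2}<- nz_m; rewrite qpochD mulrAC divff ?mul1r.
Qed.

Lemma qpochNz a p d : qpoch a p (- d%:Z) = (qpoch (a / p) p^-1 d)^-1.
Proof. by case: d => [|d]; [rewrite oppr0 !qpoch0 invr1 | rewrite -NegzE]. Qed.

Lemma qpoch_inv a p n : a != 0 -> p != 0 ->
  qpoch a p n = (- a) ^+ n * p ^+ 'C(n, 2) * qpoch a^-1 p^-1 n.
Proof.
move=> a_nz p_nz; elim: n => [|n IHn]; first by rewrite !qpoch0 !expr0 !mul1r.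
rewrite !qpochS IHn binS bin1 exprD exprS exprVn.
by field; rewrite expf_neq0.
Qed.

Lemma qpoch_rev a p n : p != 0 -> qpoch a p n = qpoch (a * p ^+ n.-1) p^-1 n.
Proof.
move=> p_nz; rewrite /qpoch (reindex_inj rev_ord_inj); apply: eq_bigr => i _.
case: n i => [[]//|n] i /=; rewrite -mulrA exprVn; congr (1 - _ * _).
have split_n : p ^+ n = p ^+ (n - i) * p ^+ i by rewrite -exprD subnK // -ltnS.
by rewrite split_n mulfK // expf_neq0.
Qed.

Lemma prod_sub_qpoch b c p n : b != 0 ->
  \prod_(i < n) (b - c * p ^+ i) = b ^+ n * qpoch (c / b) p n.
Proof.
move=> b_nz; elim: n => [|n IHn]; first by rewrite big_ord0 qpoch0 mulr1.
by rewrite big_ord_recr /= IHn qpochS exprSr; field.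
Qed.

Lemma qpoch_shiftz x p n j : p != 0 -> qpoch x p^-1 j != 0 ->
  qpoch (x * (p / p ^+ n)) p (n%:Z - j%:Z) = qpoch x p^-1 n / qpoch x p^-1 j.
Proof.
move=> p_nz xj_nz; have pn_nz m : p ^+ m != 0 by rewrite expf_neq0.
have [le_jn | /ltnW le_nj] := leqP j n.
  rewrite -(subnKC le_jn) PoszD addrC addKr qpochD mulrAC divff // mul1r.
  case: (n - j)%N => [|k]; first by rewrite !qpoch0.
  rewrite qpoch_rev //; congr qpoch.
  by rewrite exprVn /= addnS exprS exprD; field; rewrite p_nz !pn_nz.
move: xj_nz; rewrite -(subnKC le_nj) PoszD opprD addrA subrr add0r qpochNz qpochD.
rewrite mulf_eq0 negb_or => /andP[xn_nz _].
rewrite invfM mulVKf //; congr (qpoch _ _ _)^-1.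
by rewrite exprVn; field; rewrite p_nz pn_nz.
Qed.

End QPochhammer.

Definition phi32_term (F : fieldType) (q a b c e : F) (n k : nat) :=
  q ^+ k * qpoch (q ^- n) q k * qpoch a q k * qpoch b q k /
  (qpoch q q k * qpoch c q k * qpoch e q k).

Section QSaalschutz.
Variable F : fieldType.
Variables q a b c : F.
Hypotheses (q_nz : q != 0) (a_nz : a != 0) (b_nz : b != 0) (c_nz : c != 0).
Hypothesis qq_neq1 : forall i, q ^+ i.+1 != 1.
Hypothesis cq_neq1 : forall i, c * q ^+ i != 1.
Hypothesis cab_neq1 : forall i, c / (a * b) * q ^+ i != 1.
Hypothesis abqc_neq1 : a * b * q / c != 1.

Let saal_rhs (n : nat) :=
  qpoch (c / a) q n * qpoch (c / b) q n / (qpoch c q n * qpoch (c / (a * b)) q n).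

Let term (n k : nat) := phi32_term q a b c (a * b * q / (c * q ^+ n)) n k.

Let ratio (n : nat) := (1 - c * q ^+ n / a) * (1 - c * q ^+ n / b) /
  ((1 - c * q ^+ n) * (1 - c * q ^+ n / (a * b))).

(* Wilf-Zeilberger certificate: it telescopes [term n.+1 k - ratio n * term n k] in [k]. *)
Let cert (n k : nat) :=
  - q ^+ n * c * (1 - a * b / (c * q ^+ n)) /
  (a * b * (1 - c * q ^+ n) * (1 - c * q ^+ n / (a * b)) * (1 - 1 / (q ^+ n * q))) *
  qpoch (q ^- n.+1) q k * qpoch a q k * qpoch b q k * (1 - q ^+ k) * (1 - c * q ^+ k / q) /
  (qpoch q q k * qpoch c q k * qpoch (a * b / (c * q ^+ n)) q k).

Lemma abcq_neq1 n i : (i <= n.+1)%N -> a * b / (c * q ^+ n) * q ^+ i != 1.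
Proof.
have qn_nz j : q ^+ j != 0 by rewrite expf_neq0.
rewrite leq_eqVlt ltnS => /orP[/eqP-> | le_in].
  suff -> : a * b / (c * q ^+ n) * q ^+ n.+1 = a * b * q / c by [].
  by rewrite exprSr; field; rewrite c_nz qn_nz.
have -> : a * b / (c * q ^+ n) * q ^+ i = (c / (a * b) * q ^+ (n - i))^-1.
  by rewrite -{1}(subnK le_in) exprD; field; rewrite a_nz b_nz c_nz !qn_nz.
by rewrite invr_eq1.
Qed.

Lemma saalschutz_recurrence n k : (k <= n.+1)%N ->
  term n.+1 k - ratio n * term n k = cert n k.+1 - cert n k.
Proof.
move=> le_kn; have qn_nz j : q ^+ j != 0 by rewrite expf_neq0.
have abw1 := abcq_neq1 (leq0n n.+1); rewrite expr0 mulr1 in abw1.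
have qinvS : q ^- n = q ^- n.+1 * q by rewrite exprS invfM mulrAC mulVf ?mul1r.
have balS : a * b * q / (c * q ^+ n.+1) = a * b / (c * q ^+ n).
  by rewrite exprSr; field; rewrite c_nz qn_nz.
have Q_nz : qpoch q q k != 0 by apply: qpoch_neq0 => i _; rewrite -exprS.
have C_nz : qpoch c q k != 0 by apply: qpoch_neq0.
have E_nz : qpoch (a * b / (c * q ^+ n)) q k != 0.
  by apply: qpoch_neq0 => i /ltnW /leq_trans/(_ le_kn); apply: abcq_neq1.
have ab_nz : a * b != 0 by rewrite mulf_neq0.
have cw_nz : c * q ^+ n != 0 by rewrite mulf_neq0.
have abcw : a * b - c * q ^+ n != 0 by rewrite subr_neq0_div // mulrAC.
have cwaby : c * q ^+ n - a * b * q ^+ k != 0 by rewrite subr_neq0_div // mulrAC abcq_neq1.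
have cwab : c * q ^+ n - a * b != 0 by rewrite subr_neq0_div.
have qw1 : q ^+ n * q - 1 != 0 by rewrite subr_eq0 -exprSr.
have qy1 : 1 - q * q ^+ k != 0 by rewrite one_sub_neq0 // -exprS.
rewrite /term /cert /phi32_term balS [a * b * q / _]mulrAC qinvS.
rewrite !qpoch_shift1 ?invr_eq1 // !qpochS /ratio [q ^+ k.+1]exprS [q ^+ n.+1]exprS.
by field; rewrite E_nz C_nz Q_nz q_nz qn_nz b_nz a_nz c_nz qw1 abcw qy1 cwaby cwab !one_sub_neq0.
Qed.

Lemma term_out n : term n n.+1 = 0.
Proof.
rewrite /term /phi32_term (@qpoch_eq0 _ _ _ _ n) ?mulr0 ?mul0r //.
by rewrite mulVf // expf_neq0.
Qed.

Lemma cert0 n : cert n 0 = 0.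
Proof. by rewrite /cert expr0 subrr !(mulr0, mul0r). Qed.

Lemma cert_out n : cert n n.+2 = 0.
Proof.
rewrite /cert (@qpoch_eq0 _ _ _ _ n.+1) ?mulr0 ?mul0r //.
by rewrite mulVf // expf_neq0.
Qed.

Lemma saal_rhsS n : saal_rhs n.+1 = ratio n * saal_rhs n.
Proof.
have C_nz : qpoch c q n != 0 by apply: qpoch_neq0.
have D_nz : qpoch (c / (a * b)) q n != 0 by apply: qpoch_neq0.
have abcw : a * b - c * q ^+ n != 0 by rewrite subr_neq0_div ?mulf_neq0 // mulrAC.
rewrite /saal_rhs /ratio !qpochS.
by field; rewrite C_nz D_nz abcw a_nz b_nz one_sub_neq0.
Qed.

Theorem q_saalschutz n :
  \sum_(k < n.+1) phi32_term q a b c (a * b * q / (c * q ^+ n)) n k =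
  qpoch (c / a) q n * qpoch (c / b) q n / (qpoch c q n * qpoch (c / (a * b)) q n).
Proof.
elim: n => [|n IHn].
  by rewrite big_ord1 /phi32_term !qpoch0 expr0 !mul1r invr1.
rewrite -/(saal_rhs n.+1) saal_rhsS /saal_rhs -IHn; apply/eqP; rewrite -subr_eq0; apply/eqP.
have -> : \sum_(k < n.+1) term n k = \sum_(k < n.+2) term n k.
  by rewrite [RHS]big_ord_recr /= term_out addr0.
rewrite mulr_sumr -sumrB -(big_mkord xpredT (fun k => term n.+1 k - ratio n * term n k)).
rewrite (telescope_sumr_eq (cert n)) // ?cert0 ?cert_out ?subrr //.
by move=> k /andP[_ le_kn]; apply: saalschutz_recurrence.
Qed.

End QSaalschutz.

Section QPochhammerBase.
Variable F : fieldType.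
Variable q : F.
Hypotheses (q_nz : q != 0) (qq_neq1 : forall i, q ^+ i.+1 != 1).
Implicit Types (d j k m n N : nat).

Lemma qpoch_qq_neq0 n : qpoch q q n != 0.
Proof. by apply: qpoch_neq0 => i _; rewrite -exprS. Qed.

Lemma qpoch_qinv N d : (d <= N)%N ->
  qpoch (q ^- N) q d = (-1) ^+ d * q ^+ 'C(d, 2) / q ^+ (N * d) *
                       (qpoch q q N / qpoch q q (N - d)%N).
Proof.
move=> le_dN.
have rev : qpoch (q ^+ N) q^-1 d = qpoch q q N / qpoch q q (N - d)%N.
  rewrite -qpoch_subn ?leq_subr ?qpoch_qq_neq0 // subKn //.
  case: d le_dN => [|d] le_dN; first by rewrite !qpoch0.
  rewrite qpoch_rev ?invr_neq0 // invrK; congr qpoch.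
  by rewrite /= exprVn -{1}(subnK le_dN) exprD exprS mulrA mulfK ?expf_neq0 // mulrC.
rewrite qpoch_inv ?invr_neq0 ?expf_neq0 // invrK rev.
by rewrite (exprNn (q ^- N)) exprVn -exprM [_ / _ * _]mulrAC.
Qed.

Lemma qpoch1Nz d : qpoch 1 q (- d%:Z) = (- q) ^+ d * q ^+ 'C(d, 2) / qpoch q q d.
Proof.
rewrite qpochNz div1r qpoch_inv ?invr_neq0 // !invrK -invrN.
by rewrite !exprVn !invfM !invrK.
Qed.

Lemma qpoch_qinv_qbinomial d n j :
  (-1) ^+ d * q ^+ ('C(d, 2) + j * d + d * n) * q ^+ d * qpoch 1 q (- d%:Z) *
  qpoch (q ^- (d + n)) q d * qpoch (q ^- (j + d)) q d * qpoch q q n / qpoch q q (d + n)%N =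
  qpoch q q (j + d)%N / (qpoch q q j * qpoch q q d).
Proof.
rewrite qpoch1Nz !qpoch_qinv ?leq_addr ?leq_addl // addKn addnK.
rewrite !mulnDl (mulnC n d) -bin2_sqr !exprD [q ^+ ('C(d, 2) * 2)]exprM [(- q) ^+ d]exprNn.
move: (qpoch_qq_neq0 j) (qpoch_qq_neq0 d) (qpoch_qq_neq0 n) (qpoch_qq_neq0 (d + n)).
by rewrite -signr_odd; case: (odd d) => Qj Qd Qn Qdn; field; rewrite Qj Qd Qn Qdn !expf_neq0.
Qed.

Lemma qpoch_reflect t n j : t != 0 -> (forall i, t * q ^+ i != 1) ->
  qpoch t q j =
  (- t) ^+ j * q ^+ ('C(j, 2) + j * n) *
  qpoch (t^-1 * (q / q ^+ (n + j))) q n * qpoch t q n * qpoch t^-1 q^-1 j /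
  (qpoch t^-1 q^-1 n * qpoch (t * q ^+ j) q n).
Proof.
move=> t_nz tq_neq1; have qn_nz m : q ^+ m != 0 by rewrite expf_neq0.
have tq_nz m k : qpoch (t * q ^+ m) q k != 0.
  by apply: qpoch_neq0 => i _; rewrite -mulrA -exprD.
have tinv_nz m k : qpoch (t * q ^+ m)^-1 q^-1 k != 0.
  by apply: qpoch_neq0 => i _; rewrite exprVn -invfM -mulrA -exprD invr_eq1.
have qpoch_e : qpoch (t^-1 * (q / q ^+ (n + j))) q n =
    qpoch t^-1 q^-1 (j + n)%N / qpoch t^-1 q^-1 j.
  rewrite qpochD [RHS]mulrC mulKf; last by have := tinv_nz 0%N j; rewrite expr0 mulr1.
  case: n => [|n]; first by rewrite !qpoch0.
  rewrite qpoch_rev //; congr qpoch.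
  by rewrite /= exprVn addSn exprS exprD; field; rewrite t_nz q_nz !qn_nz.
have qpoch_tinv : qpoch t^-1 q^-1 (n + j)%N =
    qpoch t^-1 q^-1 n * qpoch (t * q ^+ n)^-1 q^-1 j.
  by rewrite qpochD invfM exprVn.
have qpoch_t : qpoch t q j = qpoch t q n * qpoch (t * q ^+ n) q j / qpoch (t * q ^+ j) q n.
  by rewrite -qpochD addnC qpochD mulfK.
rewrite qpoch_e [(j + n)%N]addnC qpoch_tinv qpoch_t (@qpoch_inv _ (t * q ^+ n)) ?mulf_neq0 //.
rewrite -mulNr exprMn -exprM [(n * j)%N]mulnC exprD.
move: (tq_nz j n) (tinv_nz 0%N n) (tinv_nz 0%N j); rewrite expr0 mulr1.
by move=> tqj tinvn tinvj; field; rewrite tqj tinvn tinvj.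
Qed.

Section PhibarShift.
Variables (d n : nat) (a b c e : F).
Hypotheses (cq_nz : qpoch (c * q ^+ d) q n != 0) (eq_nz : qpoch (e * q ^+ d) q n != 0).

Let summand k :=
  q ^+ k * qpoch (q ^- (d + n)) q k / qpoch q q k *
  (qpoch a q k * qpoch (c * q ^+ k) q (d + n - k)%N *
   (qpoch b q k * qpoch (q / q ^+ d * q ^+ k) q (d + n - k)%N *
    (qpoch q q k * qpoch (e * q ^+ k) q (d + n - k)%N))).

Lemma phibar_summand :
  phibar (d + n) [:: a; b; q] [:: c; q / q ^+ d; e] q q = \sum_(k < (d + n).+1) summand k.
Proof. by apply: eq_bigr => k _; rewrite !big_ord_recl big_ord0 mulr1. Qed.

Lemma summand_lt k : (k < d)%N -> summand k = 0.
Proof.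
move=> lt_kd; rewrite /summand.
rewrite [qpoch (q / _ * _) _ _](@qpoch_eq0 _ _ _ _ (d - k.+1)) ?(mulr0, mul0r) //; first by lia.
have -> : q ^+ d = q * q ^+ (k + (d - k.+1)) by rewrite -exprS; congr (_ ^+ _); lia.
by rewrite -mulrA -exprD; field; rewrite q_nz expf_neq0.
Qed.

Lemma summand_shift m : (m <= n)%N ->
  summand (d + m) =
  q ^+ d * qpoch (q ^- (d + n)) q d * qpoch a q d * qpoch b q d *
  (qpoch (c * q ^+ d) q n * qpoch q q n * qpoch (e * q ^+ d) q n) *
  phi32_term q (a * q ^+ d) (b * q ^+ d) (c * q ^+ d) (e * q ^+ d) n m.
Proof.
move=> le_mn; rewrite /summand /phi32_term subnDl.
have shift x : x * q ^+ (d + m) = x * q ^+ d * q ^+ m by rewrite exprD mulrA.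
have qinv_shift : q ^- (d + n) * q ^+ d = q ^- n.
  by rewrite exprD invfM mulrAC mulVf ?expf_neq0 ?mul1r.
rewrite !shift divfK ?expf_neq0 // !qpoch_subn ?(qpoch_neq0_le le_mn) ?qpoch_qq_neq0 //.
rewrite [qpoch (q ^- _) _ _]qpochD [qpoch a _ _]qpochD [qpoch b _ _]qpochD qinv_shift exprD.
move: (qpoch_qq_neq0 (d + m)) (qpoch_qq_neq0 m).
move: (qpoch_neq0_le le_mn cq_nz) (qpoch_neq0_le le_mn eq_nz).
set Qdm := qpoch q q (d + m)%N; set Qm := qpoch q q m.
set Cm := qpoch (c * q ^+ d) q m; set Em := qpoch (e * q ^+ d) q m.
by move=> Cm_nz Em_nz Qdm_nz Qm_nz; field; rewrite Em_nz Cm_nz Qm_nz Qdm_nz.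
Qed.

Lemma phibar_shift :
  phibar (d + n) [:: a; b; q] [:: c; q / q ^+ d; e] q q =
  q ^+ d * qpoch (q ^- (d + n)) q d * qpoch a q d * qpoch b q d *
  (qpoch (c * q ^+ d) q n * qpoch q q n * qpoch (e * q ^+ d) q n) *
  \sum_(m < n.+1) phi32_term q (a * q ^+ d) (b * q ^+ d) (c * q ^+ d) (e * q ^+ d) n m.
Proof.
rewrite phibar_summand mulr_sumr -(big_mkord xpredT summand).
rewrite (@big_cat_nat _ _ _ d) //= ?leqW ?leq_addr //.
rewrite big1_seq ?add0r => [|k]; last by rewrite mem_index_iota => /andP[_ /summand_lt].
rewrite -{1}(add0n d) big_addn subSn ?leq_addr // addKn big_mkord.
by apply: eq_bigr => m _; rewrite addnC summand_shift // -ltnS.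
Qed.

End PhibarShift.

End QPochhammerBase.

Section DiagonalWeight.
Variable F : fieldType.
Variables q s1 s2 : F.
Hypotheses (q_nz : q != 0) (s1_nz : s1 != 0) (s2_nz : s2 != 0).
Hypothesis qq_neq1 : forall i, q ^+ i.+1 != 1.
Hypothesis s1q_neq1 : forall i, s1 ^+ 2 * q ^+ i != 1.
Hypothesis s2q_neq1 : forall i, s2 ^+ 2 * q ^+ i != 1.
Hypothesis s1_neq_q : s1 ^+ 2 != q.
Implicit Types (d j k m n : nat).

Local Notation t := (s1 ^+ 2).
Local Notation nu := (s2 ^+ 2).
Local Notation mu := (s2 ^+ 2 / s1 ^+ 2).

Lemma Rweight_diag i1 i2 j1 j2 :
  Rweight q (s2 / s1) s1 s2 i1 i2 j1 j2 =
  (j1 + i2 == i1 + j2)%N%:R *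
  ((- s2) ^+ j1 * q ^+ ((j1 * (j1 + 2 * i2 - 1)) %/ 2)%N * s2 ^ (i2%:Z + j2%:Z - i1%:Z) *
   qpoch 1 q (j2%:Z - j1%:Z) /
   (qpoch q q i1 * qpoch nu q (i1 + j2)%N *
    qpoch (t^-1 * q ^ (1 - i2%:Z)) q (i2%:Z - j2%:Z)) *
   phibar i1 [:: q ^- j1; mu; q]
     [:: nu; q ^ (1 + j2%:Z - j1%:Z); t^-1 * q ^ (1 - i1%:Z - j2%:Z)] q q).
Proof.
rewrite /Rweight.
have -> : - (s1 * (s2 / s1)) = - s2 by field; rewrite ?s1_nz ?s2_nz.
have -> : s2 / s1 * s1 / s2 = 1 by field; rewrite ?s1_nz ?s2_nz.
have -> : s2 / s1 * s1 * s2 = nu by field; rewrite ?s1_nz ?s2_nz.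
have -> : s2 / s1 / s1 * s2 = mu by field; rewrite ?s1_nz ?s2_nz.
by have -> : q / (s2 / s1) / s1 * s2 = q by field; rewrite ?s1_nz ?s2_nz.
Qed.

Lemma qpoch_s1q_neq0 m k : qpoch (t * q ^+ m) q k != 0.
Proof. by apply: qpoch_neq0 => i _; rewrite -mulrA -exprD. Qed.

Lemma qpoch_s2q_neq0 m k : qpoch (nu * q ^+ m) q k != 0.
Proof. by apply: qpoch_neq0 => i _; rewrite -mulrA -exprD. Qed.

Lemma qpoch_s1inv_neq0 k : qpoch t^-1 q^-1 k != 0.
Proof. by apply: qpoch_neq0 => i _; rewrite exprVn -invfM invr_eq1. Qed.

Lemma qpoch_s1inv_shift_neq0 n j : qpoch (t^-1 * (q / q ^+ (n + j))) q n != 0.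
Proof.
apply: qpoch_neq0 => i lt_in.
have -> : t^-1 * (q / q ^+ (n + j)) * q ^+ i = (t * q ^+ (n + j - i.+1))^-1.
  rewrite -[in q ^+ (n + j)](subnK (_ : i.+1 <= n + j)%N); last by lia.
  by rewrite exprD [q ^+ i.+1]exprS; field; rewrite ?(s1_nz, q_nz, expf_neq0).
by rewrite invr_eq1.
Qed.

Lemma balance_neq1 d j : q ^- j * (mu * q ^+ d) * q / (nu * q ^+ d) != 1.
Proof.
have qn_nz m : q ^+ m != 0 by rewrite expf_neq0.
case: j => [|j].
  have -> : q ^- 0 * (mu * q ^+ d) * q / (nu * q ^+ d) = q / t.
    by rewrite expr0 invr1; field; rewrite ?(s1_nz, s2_nz, q_nz, qn_nz).
  by apply: contra_neq s1_neq_q => /divr1_eq ->.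
have -> : q ^- j.+1 * (mu * q ^+ d) * q / (nu * q ^+ d) = (t * q ^+ j)^-1.
  by rewrite exprS; field; rewrite ?(s1_nz, s2_nz, q_nz, qn_nz).
by rewrite invr_eq1.
Qed.

Lemma phibar_diag_eval n d j :
  phibar (d + n) [:: q ^- (j + d); mu; q] [:: nu; q / q ^+ d; t^-1 * (q / q ^+ (d + n + j))] q q =
  q ^+ d * qpoch (q ^- (d + n)) q d * qpoch (q ^- (j + d)) q d * qpoch mu q d *
  qpoch q q n * qpoch (t^-1 * (q / q ^+ (n + j))) q n *
  qpoch (nu * q ^+ (j + d)) q n * qpoch t q n / qpoch (t * q ^+ j) q n.
Proof.
have qn_nz m : q ^+ m != 0 by rewrite expf_neq0.
have -> : t^-1 * (q / q ^+ (d + n + j)) = t^-1 * (q / q ^+ (n + j)) / q ^+ d.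
  by rewrite -addnA exprD; field; rewrite ?(s1_nz, q_nz, qn_nz).
rewrite phibar_shift ?divfK ?qpoch_s2q_neq0 ?qpoch_s1inv_shift_neq0 //.
have -> : q ^- (j + d) * q ^+ d = q ^- j by rewrite exprD invfM -mulrA mulVf ?mulr1.
have -> : t^-1 * (q / q ^+ (n + j)) = q ^- j * (mu * q ^+ d) * q / (nu * q ^+ d * q ^+ n).
  by rewrite exprD; field; rewrite ?(s1_nz, s2_nz, q_nz, qn_nz).
have cab : nu * q ^+ d / (q ^- j * (mu * q ^+ d)) = t * q ^+ j.
  by field; rewrite ?(s1_nz, s2_nz, q_nz, qn_nz).
rewrite q_saalschutz ?balance_neq1 ?invr_neq0 ?mulf_neq0 ?invr_neq0 ?expf_neq0 //.
- have -> : nu * q ^+ d / q ^- j = nu * q ^+ (j + d) by rewrite invrK exprD; field.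
  have -> : nu * q ^+ d / (mu * q ^+ d) = t by field; rewrite ?(s1_nz, s2_nz, q_nz, qn_nz).
  by rewrite cab; field; rewrite qpoch_s2q_neq0 qpoch_s1q_neq0.
- by move=> i; rewrite -mulrA -exprD.
- by move=> i; rewrite cab -mulrA -exprD.
Qed.

Lemma Rweight_diag_shifted n d j :
  Rweight q (s2 / s1) s1 s2 (d + n) n (j + d) j =
  (- s2) ^+ (j + d) * q ^+ ('C(j + d, 2) + (j + d) * n) * (s2 ^+ j / s2 ^+ d) *
  qpoch 1 q (- d%:Z) /
  (qpoch q q (d + n)%N * qpoch nu q (d + n + j)%N *
   (qpoch t^-1 q^-1 n / qpoch t^-1 q^-1 j)) *
  phibar (d + n) [:: q ^- (j + d); mu; q]
    [:: nu; q / q ^+ d; t^-1 * (q / q ^+ (d + n + j))] q q.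
Proof.
rewrite Rweight_diag (_ : (j + d + n == d + n + j)%N) ?mul1r; last by apply/eqP; lia.
rewrite half_mul_bin2 (_ : 1 - n%:Z = 1%N%:Z - n%:Z) // expfz_subn //.
rewrite qpoch_shiftz ?qpoch_s1inv_neq0 //.
rewrite (_ : n%:Z + j%:Z - (d + n)%:Z = j%:Z - d%:Z); last by lia.
rewrite (_ : j%:Z - (j + d)%:Z = - d%:Z); last by lia.
rewrite (_ : 1 + j%:Z - (j + d)%:Z = 1%N%:Z - d%:Z); last by lia.
rewrite (_ : 1 - (d + n)%:Z - j%:Z = 1%N%:Z - (d + n + j)%:Z); last by lia.
by rewrite !expfz_subn.
Qed.

Lemma Rweight_diag_qbb n d j :
  Rweight q (s2 / s1) s1 s2 (d + n) n (j + d) j = qbb q mu nu j (j + d).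
Proof.
have split_nu : qpoch nu q (d + n + j)%N = qpoch nu q (j + d)%N * qpoch (nu * q ^+ (j + d)) q n.
  by rewrite -qpochD; congr (qpoch _ _ (Posz _)); lia.
have split_exp : ('C(j + d, 2) + (j + d) * n = 'C(j, 2) + j * n + ('C(d, 2) + j * d + d * n))%N.
  by rewrite bin2D mulnDl; lia.
rewrite Rweight_diag_shifted phibar_diag_eval /qbb leq_addr addKn split_nu split_exp.
rewrite -(qpoch_qinv_qbinomial q_nz qq_neq1 d n j).
rewrite prod_sub_qpoch ?mulf_neq0 ?invr_neq0 ?expf_neq0 //.
have -> : nu / mu = t by field; rewrite ?(s1_nz, s2_nz).
rewrite [qpoch t q j](qpoch_reflect q_nz n j (expf_neq0 2 s1_nz) s1q_neq1).
rewrite !exprD [(- s2) ^+ j]exprNn [(- s2) ^+ d]exprNn [(- t) ^+ j]exprNn expr_div_n exprAC.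
have nu_nz : qpoch nu q (j + d)%N != 0 by apply: qpoch_neq0.
have Qdn_nz := qpoch_qq_neq0 qq_neq1 (d + n).
field; rewrite -exprD Qdn_nz nu_nz qpoch_s1q_neq0 !qpoch_s1inv_neq0 qpoch_s2q_neq0.
by rewrite !expf_neq0.
Qed.

Lemma Rweight_diag_eq i1 i2 j1 j2 :
  Rweight q (s2 / s1) s1 s2 i1 i2 j1 j2 =
  (i1 + j2 == i2 + j1)%N%:R * (j2 <= j1)%N%:R * qbb q mu nu j2 j1.
Proof.
have [conserved | not_conserved] := eqVneq (j1 + i2)%N (i1 + j2)%N; last first.
  rewrite Rweight_diag (negbTE not_conserved) (_ : (i1 + j2 == i2 + j1)%N = false) ?mul0r //.
  by apply/negbTE; apply: contra not_conserved => /eqP eq_ij; apply/eqP; lia.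
rewrite (_ : (i1 + j2 == i2 + j1)%N) ?mul1r; last by apply/eqP; lia.
have [le_j21 | lt_j12] := leqP j2 j1; last first.
  rewrite mul0r Rweight_diag conserved eqxx mul1r (subzn (ltnW lt_j12)).
  by rewrite (@qpoch_eq0 _ _ _ _ 0) ?subn_gt0 ?mulr1 // !(mulr0, mul0r).
have [d def_j1] : exists d, j1 = (j2 + d)%N by exists (j1 - j2)%N; rewrite subnKC.
subst j1; have -> : i1 = (d + i2)%N by lia.
by rewrite mul1r Rweight_diag_qbb.
Qed.

End DiagonalWeight.

Section RationalFunctions.
Variable R : realFieldType.
Variable q : R.
Hypotheses (q_gt0 : 0 < q) (q_lt1 : q < 1).

Local Notation Q := (rf_const q).
Local Notation s1 := (rf_s1 R).
Local Notation s2 := (rf_s2 R).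

Lemma rf_const_neq0 : Q != 0.
Proof. by rewrite tofrac_eq0 !polyC_eq0 gt_eqF. Qed.

Lemma rf_s1_neq0 : s1 != 0.
Proof. by rewrite tofrac_eq0 polyC_eq0 polyX_eq0. Qed.

Lemma rf_s2_neq0 : s2 != 0.
Proof. by rewrite tofrac_eq0 polyX_eq0. Qed.

Lemma rf_constX_neq1 i : Q ^+ i.+1 != 1.
Proof.
rewrite -tofracXn -tofrac1 tofrac_eq -!rmorphXn.
apply/eqP => /(congr1 (fun p : {poly {poly R}} => p`_0`_0)).
by rewrite !coefC /= => /eqP; rewrite lt_eqF // exprn_ilt1 // ltW.
Qed.

Lemma rf_s1X_neq1 i : s1 ^+ 2 * Q ^+ i != 1.
Proof.
rewrite -!tofracXn -tofracM -tofrac1 tofrac_eq -!rmorphXn -rmorphM.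
apply/eqP => /(congr1 (fun p : {poly {poly R}} => p`_0`_0)).
by rewrite coefC coef1 coefXnM /= coef1 /= => /eqP; rewrite eq_sym oner_eq0.
Qed.

Lemma rf_s1X_neq_const : s1 ^+ 2 != Q.
Proof.
rewrite -tofracXn tofrac_eq -rmorphXn (inj_eq polyC_inj).
by apply/eqP => /(congr1 (coefp 2)) /=; rewrite coefXn coefC /= => /eqP; rewrite oner_eq0.
Qed.

Lemma rf_s2X_neq1 i : s2 ^+ 2 * Q ^+ i != 1.
Proof.
rewrite -!tofracXn -tofracM -tofrac1 tofrac_eq -rmorphXn.
apply/eqP => /(congr1 (fun p : {poly {poly R}} => p`_0`_0)).
by rewrite coef1 coefXnM /= coef0 coef1 /= => /eqP; rewrite eq_sym oner_eq0.
Qed.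

End RationalFunctions.

Theorem proposition3p5 (R : realFieldType) (q : R) (hq0 : 0 < q) (hq1 : q < 1)
    (i1 i2 j1 j2 : nat) :
  let Q := rf_const q in
  let s1 := rf_s1 R in
  let s2 := rf_s2 R in
  Rweight Q (s2 / s1) s1 s2 i1 i2 j1 j2 =
  (i1 + j2 == i2 + j1)%N%:R * (j2 <= j1)%N%:R *
  qbb Q (s2 ^+ 2 / s1 ^+ 2) (s2 ^+ 2) j2 j1.
Proof.
apply: Rweight_diag_eq.
- exact: rf_const_neq0.
- exact: rf_s1_neq0.
- exact: rf_s2_neq0.
- exact: rf_constX_neq1.
- exact: rf_s1X_neq1.
- exact: rf_s2X_neq1.
- exact: rf_s1X_neq_const.
Qed.
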